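(* Let $\Omega$ be a nonempty set and $\succeq$ a regular stochastic order on $\mathfrak F(\Omega)$. Then $\succeq$ is induced by an ideal of subsets of $\Omega$ if and only if there exists a weak$^*$ compact set $\mathbb P_\succeq\subset\mathbb P$ such that $\sup\{\mu(A):\mu\in\mathbb P_\succeq\}\in\{0,1\}$ for all $A\subset\Omega$ and, for all $f,g\in\mathfrak F(\Omega)$, $$f\succeq g\quad\text{if and only if}\quad\inf_{\mu\in\mathbb P_\succeq}\int(f-g)\,d\mu\ge0 .$$
   Context: $\mathfrak F(\Omega)$ is the set of real-valued functions on $\Omega$; inequalities between functions are pointwise and constants are identified with constant functions. A regular stochastic order is a reflexive, transitive binary relation $\succeq$ on $\mathfrak F(\Omega)$ such that: (TRIV) $0\not\succeq 1$; (CONE) $f_i\succeq g_i$ and $a_i\ge0$ for $i=1,2$ imply $a_1f_1+a_2f_2\succeq a_1g_1+a_2g_2$; (CERT) $f\ge0$ implies $f\succeq0$; (APPR) if $f+2^{-n}\succeq0$ for all $n\in\mathbb N$ then $f\succeq0$; (REST) $f\succeq0$ and $A\subset\Omega$ imply $f1_A\succeq0$. The order $\succeq$ is induced by an ideal if there is a family $\mathcal N$ of subsets of $\Omega$, closed under finite unions and under taking subsets, with $\Omega\notin\mathcal N$, such that $f\succeq g$ iff $\{f-g\le-\eta\}\in\mathcal N$ for every $\eta>0$. $ba$ denotes the bounded finitely additive real set functions on all subsets of $\Omega$, $\mathbb P$ the finitely additive probabilities in $ba$; the weak$^*$ topology on $ba$ is the one induced by duality with bounded functions, $\langle m,f\rangle=\int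 f\,dm$. For $\mu\in ba$ and $f\in\mathfrak F(\Omega)$, $\int f\,d\mu:=\lim_n\int[(f^+\wedge n)-(f^-\wedge n)]\,d\mu$ if this limit exists in $[-\infty,\infty]$, and $\int f\,d\mu:=\infty$ otherwise. *)

From HB Require Import structures.
From mathcomp Require Import all_boot all_order all_algebra.
From mathcomp Require Import all_classical all_reals all_analysis.
Set Implicit Arguments. Unset Strict Implicit. Unset Printing Implicit Defensive.
Import Order.TTheory GRing.Theory Num.Theory.
Local Open Scope classical_set_scope.
Local Open Scope ring_scope.

Section Defs.
Variables (T : Type) (R : realType).

Definition indic (A : set T) : T -> R := fun x => if `[< A x >] then 1 else 0.

Definition regular_stochastic_order (ge : (T -> R) -> (T -> R) -> Prop) : Prop :=
  (forall f, ge f f) /\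
  (forall f g h, ge f g -> ge g h -> ge f h) /\
  ~ ge (fun=> 0) (fun=> 1) /\
  (forall f1 f2 g1 g2 (a1 a2 : R), ge f1 g1 -> ge f2 g2 ->
                0 <= a1 -> 0 <= a2 ->
                ge (fun x => a1 * f1 x + a2 * f2 x) (fun x => a1 * g1 x + a2 * g2 x)) /\
  (forall f, (forall x, 0 <= f x) -> ge f (fun=> 0)) /\
  (forall f, (forall n : nat, ge (fun x => f x + 2%:R ^- n) (fun=> 0)) ->
                ge f (fun=> 0)) /\
  (forall f (A : set T), ge f (fun=> 0) ->
                ge (fun x => f x * indic A x) (fun=> 0)).

Definition induced_by_ideal (ge : (T -> R) -> (T -> R) -> Prop) : Prop :=
  exists N : set (set T),
    [/\ (forall A B, N A -> N B -> N (A `|` B)),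
        (forall A B, N A -> B `<=` A -> N B),
        ~ N setT &
        (forall f g, ge f g <->
           (forall eta : R, 0 < eta -> N [set x | f x - g x <= - eta]))].

Definition is_fprob (m : set T -> R) : Prop :=
  [/\ m setT = 1,
      (forall A, 0 <= m A) &
      (forall A B, A `&` B = set0 -> m (A `|` B) = m A + m B)].

Definition bounded_fun (f : T -> R) : Prop := exists M : R, forall x, `|f x| <= M.

Definition simple_eval (s : seq (R * set T)) (x : T) : R :=
  \sum_(p <- s) p.1 * indic p.2 x.
Definition simple_int (m : set T -> R) (s : seq (R * set T)) : R :=
  \sum_(p <- s) p.1 * m p.2.

Definition int_bdd (m : set T -> R) (f : T -> R) : R :=
  sup [set simple_int m s | s in [set s | forall x, simple_eval s x <= f x]].

Definition trunc (n : nat) (f : T -> R) : T -> R :=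
  fun x => Num.min (Num.max (f x) 0) n%:R - Num.min (Num.max (- f x) 0) n%:R.

(** the extended integral of the paper: the limit of the truncated integrals
    if it exists in [-oo,+oo], and +oo otherwise *)
Definition int_ext (m : set T -> R) (f : T -> R) : \bar R :=
  let u := fun n : nat => ((int_bdd m (trunc n f))%:E : \bar R) in
  if `[< cvgn u >] then limn u else +oo%E.

(** weak* topology on P (subspace topology from ba, i.e. the coarsest topology
    making m |-> \int f dm continuous for every bounded f) *)
Definition wstar_open (U : set (set T -> R)) : Prop :=
  forall mu, U mu -> exists (fs : seq (T -> R)) (eps : R),
    [/\ all (fun f => `[< bounded_fun f >]) fs, 0 < eps &
        forall nu, is_fprob nu ->
          all (fun f => `|int_bdd nu f - int_bdd mu f| < eps) fs -> U nu].

Definition wstar_compact (K : set (set T -> R)) : Prop :=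
  forall Us : set (set (set T -> R)),
    (forall U, Us U -> wstar_open U) -> K `<=` \bigcup_(U in Us) U ->
    exists l : seq (set (set T -> R)),
      all (fun U => `[< Us U >]) l /\
      K `<=` (fun mu => has (fun U => `[< U mu >]) l).

End Defs.

(* If the order is induced by an ideal N, let P consist of the {0,1}-valued
   charges of the ultrafilters disjoint from N.  A set is N-null iff no such
   ultrafilter contains it, and P is weak* compact for the same reason the
   space of ultrafilters is: a weak* neighbourhood of the charge of G contains
   the charges of all ultrafilters through a suitable member of G.
   Conversely, let N be the sets that are null for every mu in P; by weak*
   compactness a supremum mu(A) = 1 is attained, so every set outside N has
   full mass under some mu in P.  In both directions f >= g then reduces to the
   two estimates: the integral of h w.r.t. mu is at most -eta when
   mu{h <= -eta} = 1, and is nonnegative when all the sets {h <= -eta} are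
   mu-null. *)

From mathcomp Require Import all_boot all_order all_algebra.
From mathcomp Require Import all_classical all_reals all_analysis.
From mathcomp Require Import lra.
Import Order.TTheory GRing.Theory Num.Theory.
Set Implicit Arguments. Unset Strict Implicit.
Local Open Scope classical_set_scope.
Local Open Scope ring_scope.

Section FiniteProbability.
Variables (T : Type) (R : realType) (m : set T -> R).
Hypothesis m_fprob : is_fprob m.

Lemma fprobT : m setT = 1. Proof. by case: m_fprob. Qed.

Lemma fprob_ge0 A : 0 <= m A. Proof. by case: m_fprob. Qed.

Lemma fprob_splitI A B : m A = m (A `&` B) + m (A `&` ~` B).
Proof.
case: m_fprob => _ _ add; rewrite -add -?setIUr ?setUCr ?setIT //.
by rewrite setIACA setICr setI0.
Qed.

Lemma le_fprob A B : A `<=` B -> m A <= m B.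
Proof.
by move=> AB; rewrite (fprob_splitI B A) (setIidr AB) lerDl fprob_ge0.
Qed.

Lemma fprob_le1 A : m A <= 1.
Proof. by rewrite -fprobT le_fprob. Qed.

Lemma fprob_setC A : m (~` A) = 1 - m A.
Proof. by rewrite -fprobT (fprob_splitI setT A) !setTI addrC addKr. Qed.

Lemma fprob0 : m set0 = 0.
Proof. by rewrite -setCT fprob_setC fprobT subrr. Qed.

Lemma fprob_setU_le A B : m (A `|` B) <= m A + m B.
Proof.
rewrite (fprob_splitI (A `|` B) A) (setIidr (@subsetUl _ A B)) lerD2l.
by apply: le_fprob => x [[]].
Qed.

Lemma fprob_null_subset A B : B `<=` A -> m A = 0 -> m B = 0.
Proof.
by move=> BA mA0; apply/le_anti; rewrite fprob_ge0 -mA0 le_fprob.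
Qed.

End FiniteProbability.

Section SimpleIntegral.
Variables (T : Type) (R : realType) (m : set T -> R).
Hypothesis m_fprob : is_fprob m.

Lemma indic_in (A : set T) x : A x -> indic R A x = 1.
Proof. by move=> Ax; rewrite /indic asboolT. Qed.

Lemma indic_notin (A : set T) x : ~ A x -> indic R A x = 0.
Proof. by move=> Ax; rewrite /indic asboolF. Qed.

Lemma simple_eval_cons (p : R * set T) s x :
  simple_eval (p :: s) x = p.1 * indic R p.2 x + simple_eval s x.
Proof. by rewrite /simple_eval big_cons. Qed.

Lemma simple_int_cons (p : R * set T) s :
  simple_int m (p :: s) = p.1 * m p.2 + simple_int m s.
Proof. by rewrite /simple_int big_cons. Qed.

Lemma simple_int_splitI s C : simple_int m s =
  \sum_(p <- s) p.1 * m (p.2 `&` C) + \sum_(p <- s) p.1 * m (p.2 `&` ~` C).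
Proof.
rewrite /simple_int -big_split /=; apply: eq_bigr => p _.
by rewrite -mulrDr -fprob_splitI.
Qed.

Lemma simple_int_setI_le s C c : (forall x, C x -> simple_eval s x <= c) ->
  \sum_(p <- s) p.1 * m (p.2 `&` C) <= c * m C.
Proof.
elim: s C c => [|[a B] s IH] C c sc.
  rewrite big_nil; have [[x Cx]|/set0P/negP/negbNE/eqP->] := pselect (C !=set0).
    by rewrite mulr_ge0 ?fprob_ge0 //; have := sc x Cx; rewrite /simple_eval big_nil.
  by rewrite (fprob0 m_fprob) mulr0.
have sumE : \sum_(p <- s) p.1 * m (p.2 `&` C) =
    \sum_(p <- s) p.1 * m (p.2 `&` (C `&` B)) +
    \sum_(p <- s) p.1 * m (p.2 `&` (C `&` ~` B)).
  rewrite -big_split /=; apply: eq_bigr => p _.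
  by rewrite -mulrDr (fprob_splitI m_fprob (p.2 `&` C) B) !setIA.
have inB : \sum_(p <- s) p.1 * m (p.2 `&` (C `&` B)) <= (c - a) * m (C `&` B).
  apply: IH => x [Cx Bx]; have := sc x Cx.
  by rewrite simple_eval_cons indic_in //= mulr1 -lerBrDl.
have outB : \sum_(p <- s) p.1 * m (p.2 `&` (C `&` ~` B)) <= c * m (C `&` ~` B).
  apply: IH => x [Cx nBx]; have := sc x Cx.
  by rewrite simple_eval_cons indic_notin //= mulr0 add0r.
rewrite big_cons /= sumE (fprob_splitI m_fprob C B) (setIC B C); lra.
Qed.

Lemma simple_int_le s A c : m A = 1 -> (forall x, A x -> simple_eval s x <= c) ->
  simple_int m s <= c.
Proof.
move=> mA1 sc; rewrite (simple_int_splitI s A) [X in _ + X]big1 => [|p _].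
  by rewrite addr0 -[c]mulr1 -mA1 simple_int_setI_le.
rewrite (fprob_null_subset m_fprob (A := ~` A)) ?mulr0 //.
by rewrite fprob_setC // mA1 subrr.
Qed.

Local Notation lower_simple_ints f :=
  [set simple_int m s | s in [set s | forall x, simple_eval s x <= f x]].

Lemma bounded_fun_bounds (f : T -> R) : bounded_fun f ->
  exists M, (forall x, - M <= f x) /\ (forall x, f x <= M).
Proof.
by move=> [M fM]; exists M; split => x; have /andP[] : - M <= f x <= M by rewrite -ler_norml.
Qed.

Lemma lower_simple_ints_neq0 (f : T -> R) M : (forall x, - M <= f x) ->
  lower_simple_ints f !=set0.
Proof.
move=> fM; exists (simple_int m [:: (- M, setT)]), [:: (- M, setT)] => // x.
by rewrite simple_eval_cons /simple_eval big_nil indic_in //= mulr1 addr0.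
Qed.

Lemma lower_simple_ints_ubound (f : T -> R) M : (forall x, f x <= M) ->
  has_ubound (lower_simple_ints f).
Proof.
move=> fM; exists M => _ [s /= sf <-]; apply: (@simple_int_le s setT) => [|x _].
  exact: fprobT.
exact: le_trans (sf x) (fM x).
Qed.

Lemma int_bdd_le (f : T -> R) A c : bounded_fun f -> m A = 1 ->
  (forall x, A x -> f x <= c) -> int_bdd m f <= c.
Proof.
move=> /bounded_fun_bounds[M [fM _]] mA1 fc.
apply: ge_sup => [|_ [s /= sf <-]]; first exact: lower_simple_ints_neq0 fM.
by apply: (simple_int_le mA1) => x Ax; apply: le_trans (sf x) (fc x Ax).
Qed.

Lemma int_bdd_ge (f : T -> R) A c : bounded_fun f -> m A = 1 ->
  (forall x, A x -> c <= f x) -> c <= int_bdd m f.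
Proof.
move=> /bounded_fun_bounds[M [Mf fM]] mA1 cf.
apply: ub_le_sup; first exact: lower_simple_ints_ubound fM.
exists [:: (- M, setT); (c + M, A)].
  move=> x /=; rewrite !simple_eval_cons /simple_eval big_nil indic_in //=.
  have [Ax|nAx] := pselect (A x).
    by rewrite indic_in //; have := cf x Ax; lra.
  by rewrite indic_notin //; have := Mf x; lra.
by rewrite !simple_int_cons /simple_int big_nil /= mA1 fprobT //; lra.
Qed.

Lemma le_int_bdd (f g : T -> R) A : bounded_fun f -> bounded_fun g -> m A = 1 ->
  (forall x, A x -> f x <= g x) -> int_bdd m f <= int_bdd m g.
Proof.
move=> /bounded_fun_bounds[M [Mf fM]] /bounded_fun_bounds[M' [M'g gM']] mA1 fg.
apply: ge_sup => [|_ [s /= sf <-]]; first exact: lower_simple_ints_neq0 Mf.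
have mnA0 : m (~` A) = 0 by rewrite fprob_setC // mA1 subrr.
(* Lowering s by M + M' off the full-measure set A puts it below g everywhere
   without changing its integral. *)
have -> : simple_int m s = simple_int m ((- (M + M'), ~` A) :: s).
  by rewrite simple_int_cons /= mnA0 mulr0 add0r.
apply: ub_le_sup; first exact: lower_simple_ints_ubound gM'.
exists ((- (M + M'), ~` A) :: s) => // x /=; rewrite simple_eval_cons /=.
have [Ax|nAx] := pselect (A x).
  by rewrite indic_notin; [have := sf x; have := fg x Ax; lra | exact].
by rewrite indic_in //; have := sf x; have := fM x; have := M'g x; lra.
Qed.

Lemma int_bdd_indic A : int_bdd m (indic R A) = m A.
Proof.
have indic01 x : 0 <= indic R A x <= 1 by rewrite /indic; case: asboolP; rewrite ?lexx ?ler01.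
apply/le_anti/andP; split.
  apply: ge_sup => [|_ [s /= sA <-]].
    by apply: (@lower_simple_ints_neq0 _ 0) => x; rewrite oppr0; case/andP: (indic01 x).
  rewrite (simple_int_splitI s A).
  have inA : \sum_(p <- s) p.1 * m (p.2 `&` A) <= 1 * m A.
    by apply: simple_int_setI_le => x _; case/andP: (indic01 x) => _; exact: le_trans.
  have outA : \sum_(p <- s) p.1 * m (p.2 `&` ~` A) <= 0 * m (~` A).
    by apply: simple_int_setI_le => x nAx; rewrite -(indic_notin nAx).
  lra.
apply: ub_le_sup; first by apply: (@lower_simple_ints_ubound _ 1) => x; case/andP: (indic01 x).
exists [:: (1, A)]; last by rewrite simple_int_cons /simple_int big_nil /= mul1r addr0.
by move=> x; rewrite simple_eval_cons /simple_eval big_nil /= mul1r addr0.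
Qed.

End SimpleIntegral.

Section Truncation.
Variables (T : Type) (R : realType).
Implicit Types (f : T -> R) (n k : nat).

Lemma truncE n f x : trunc n f x = Num.max (- n%:R) (Num.min (f x) n%:R).
Proof.
rewrite /trunc; have n0 : 0 <= n%:R :> R := ler0n R n.
have [fx0|fx0] := leP 0 (f x).
  rewrite max_r ?oppr_le0 // (min_l n0) subr0 max_r // le_min.
  by rewrite (le_trans _ fx0) ?(le_trans _ n0) // oppr_le0.
rewrite max_l ?oppr_ge0 ?(ltW fx0) // (min_l n0) sub0r (min_l (le_trans (ltW fx0) n0)).
have [fxn|fxn] := leP (- f x) n%:R; first by rewrite opprK max_r // -lerNl.
by rewrite max_l // -lerNr ltW.
Qed.

Lemma trunc_bounded n f : bounded_fun (trunc n f).
Proof.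
exists n%:R => x; rewrite truncE ler_norml le_max ge_max ge_min !lexx ?orbT /=.
by have := ler0n R n; lra.
Qed.

Lemma trunc_ge n f x e : 0 < e -> - e < f x -> - e <= trunc n f x.
Proof.
move=> e0 efx; rewrite truncE le_max le_min (ltW efx) (le_trans _ (ler0n R n)) ?orbT //.
by rewrite oppr_le0 ltW.
Qed.

Lemma trunc_le n f x e : e <= n%:R -> f x <= - e -> trunc n f x <= - e.
Proof. by move=> en fxe; rewrite truncE ge_max lerN2 en ge_min fxe. Qed.

Lemma trunc_nonincreasing n k f x : (n <= k)%N -> f x <= 0 -> trunc k f x <= trunc n f x.
Proof.
move=> nk fx0; rewrite !truncE !min_l ?(le_trans fx0) ?ler0n //.
by rewrite ge_max !le_max lerN2 ler_nat nk le_refl orbT.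
Qed.

End Truncation.

Section ExtendedIntegral.
Variables (T : Type) (R : realType) (m : set T -> R).
Hypothesis m_fprob : is_fprob m.
Implicit Types h : T -> R.

Lemma int_ext_ge0 h : (forall e, 0 < e -> m [set x | h x <= - e] = 0) ->
  (0 <= int_ext m h)%E.
Proof.
move=> null.
have int_ge e : 0 < e -> ((- e)%:E <= int_ext m h)%E.
  move=> e0; rewrite /int_ext; case: asboolP => cv; last exact: leey.
  apply: lime_ge => //; apply: nearW => n; rewrite lee_fin.
  apply: (int_bdd_ge m_fprob (trunc_bounded n h) (A := ~` [set x | h x <= - e])).
    by rewrite fprob_setC // null // subr0.
  by move=> x /negP; rewrite -ltNge; exact: trunc_ge.
case: (int_ext m h) int_ge => [r| |] // int_ge; last by have := int_ge 1 ltr01.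
by rewrite lee_fin; apply/ler_addgt0Pr => e /int_ge; rewrite lee_fin; lra.
Qed.

Lemma int_ext_le h e : 0 < e -> m [set x | h x <= - e] = 1 ->
  (int_ext m h <= (- e)%:E)%E.
Proof.
move=> e0 mA1; set A := [set x | h x <= - e].
have trunc_nonincr : {homo (fun n : nat => (int_bdd m (trunc n h))%:E) :
    n k / (n <= k)%N >-> (k <= n)%E}.
  move=> n k nk; rewrite lee_fin.
  apply: (le_int_bdd m_fprob (trunc_bounded _ _) (trunc_bounded _ _) mA1) => x Ax.
  by apply: trunc_nonincreasing => //; rewrite /A /= in Ax; lra.
rewrite /int_ext asboolT; last exact: ereal_nonincreasing_is_cvgn.
have [N eN] : exists N : nat, e <= N%:R.
  by exists (Num.Def.truncn e).+1; apply/ltW; exact: truncnS_gt.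
apply: lime_le; first exact: ereal_nonincreasing_is_cvgn.
exists N => // k /= Nk; apply: le_trans (trunc_nonincr _ _ Nk) _.
by rewrite lee_fin (int_bdd_le m_fprob (trunc_bounded _ _) mA1) // => x; exact: trunc_le.
Qed.

End ExtendedIntegral.

Section NullSets.
Variables (T : Type) (R : realType) (K : set (set T -> R)).
Hypothesis K_fprob : K `<=` @is_fprob T R.

Definition null_for (A : set T) : Prop := forall mu, K mu -> mu A = 0.

Lemma null_forU A B : null_for A -> null_for B -> null_for (A `|` B).
Proof.
move=> A0 B0 mu Kmu; have mu_fprob := K_fprob Kmu.
apply/le_anti; rewrite fprob_ge0 // andbT -[0]addr0 -{1}(A0 _ Kmu) -(B0 _ Kmu).
exact: fprob_setU_le.
Qed.

Lemma null_for_subset A B : null_for A -> B `<=` A -> null_for B.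
Proof. by move=> A0 BA mu Kmu; exact: (fprob_null_subset (K_fprob Kmu) BA (A0 _ Kmu)). Qed.

Lemma null_forT : (exists mu, K mu) -> ~ null_for setT.
Proof.
by move=> [mu Kmu] /(_ _ Kmu); rewrite (fprobT (K_fprob Kmu)) => /eqP; rewrite oner_eq0.
Qed.

Definition sup_zero_one : Prop :=
  forall A, ereal_sup [set (mu A)%:E | mu in K] = 0%E \/
            ereal_sup [set (mu A)%:E | mu in K] = 1%E.

Definition zero_one_family : Prop :=
  forall A, null_for A \/ exists2 mu, K mu & mu A = 1.

Hypothesis K01 : zero_one_family.

Lemma zero_one_family_sup : (exists mu, K mu) -> sup_zero_one.
Proof.
move=> [nu Knu] A; have [A0|[mu Kmu mu1]] := K01 A; [left|right]; apply/le_anti/andP; split.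
- by apply: ge_ereal_sup => _ [mu Kmu <-]; rewrite A0.
- by apply: ereal_sup_ubound; exists nu => //; rewrite A0.
- by apply: ge_ereal_sup => _ [mu' Kmu' <-]; rewrite lee_fin (fprob_le1 (K_fprob Kmu')).
- by apply: ereal_sup_ubound; exists mu => //; rewrite mu1.
Qed.

Lemma zero_one_family_inf_ge0 h :
  (0 <= ereal_inf [set int_ext mu h | mu in K])%E <->
  (forall e, 0 < e -> null_for [set x | h x <= - e]).
Proof.
split=> [inf_ge0 e e0|null]; last first.
  apply: le_ereal_inf_tmp => _ [mu Kmu <-].
  exact: (int_ext_ge0 (K_fprob Kmu) (fun e e0 => null e e0 mu Kmu)).
have [//|[mu Kmu mu1]] := K01 [set x | h x <= - e].
have : (0 <= int_ext mu h)%E by apply: le_trans inf_ge0 _; apply: ereal_inf_lbound; exists mu.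
by move/le_trans/(_ (int_ext_le (K_fprob Kmu) e0 mu1)); rewrite lee_fin; lra.
Qed.

End NullSets.

Lemma wstar_open_fprob_lt (T : Type) (R : realType) (A : set T) (c : R) :
  wstar_open [set nu : set T -> R | is_fprob nu /\ nu A < c].
Proof.
move=> mu [mu_fprob muc]; exists [:: indic R A], (c - mu A); split.
- rewrite /= andbT; apply/asboolP; exists 1 => x; rewrite /indic.
  by case: asboolP => _; rewrite ?normr1 ?normr0.
- by rewrite subr_gt0.
- move=> nu nu_fprob; rewrite /= andbT !int_bdd_indic // => nuc; split => //.
  by have := ler_norm (nu A - mu A); lra.
Qed.

Section CompactFamilies.
Variables (T : Type) (R : realType) (K : set (set T -> R)).
Hypotheses (K_fprob : K `<=` @is_fprob T R) (K_compact : wstar_compact K).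

Lemma wstar_compact_sup_attained A : ereal_sup [set (mu A)%:E | mu in K] = 1%E ->
  exists2 mu, K mu & mu A = 1.
Proof.
move=> sup1; apply: contrapT => no_mu.
(* Otherwise the open sets [nu A < c], c < 1, cover K, and a finite subcover
   keeps the supremum below 1. *)
have lt1 mu : K mu -> mu A < 1.
  move=> Kmu; rewrite lt_neqAle (fprob_le1 (K_fprob Kmu)) andbT.
  by apply/eqP => mu1; apply: no_mu; exists mu.
pose Us := [set U | exists2 c : R, c < 1 & U = [set nu | is_fprob nu /\ nu A < c]].
have [l [lUs Kl]] : exists l, all (fun U => `[< Us U >]) l /\
    K `<=` (fun mu => has (fun U => `[< U mu >]) l).
  apply: K_compact => [U [c _ ->]|mu Kmu]; first exact: wstar_open_fprob_lt.
  exists [set nu | is_fprob nu /\ nu A < (mu A + 1) / 2].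
    by exists ((mu A + 1) / 2) => //; have := lt1 _ Kmu; lra.
  by split; [exact: K_fprob | have := lt1 _ Kmu; lra].
have [c [c1 lc]] : exists c : R, c < 1 /\
    forall mu, has (fun U => `[< U mu >]) l -> mu A < c.
  elim: l lUs {Kl} => [|U l IH] /=; first by exists 0.
  move=> /andP[/asboolP[c c1 ->] /IH[c' [c'1 lc']]]; exists (Num.max c c').
  split=> [|mu /orP[/asboolP[_ muc]|/lc' muc]]; first by rewrite gt_max c1 c'1.
    by rewrite lt_max muc.
  by rewrite lt_max muc orbT.
suff : (1 <= c%:E)%E by rewrite lee_fin; lra.
rewrite -sup1; apply: ge_ereal_sup => _ [mu Kmu <-].
by rewrite lee_fin ltW // lc // Kl.
Qed.

Lemma wstar_compact_zero_one_family : sup_zero_one K -> zero_one_family K.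
Proof.
move=> sup01 A; have [sup0|/wstar_compact_sup_attained] := sup01 A; [left|by right].
move=> mu Kmu; apply/le_anti; rewrite (fprob_ge0 (K_fprob Kmu)) andbT -lee_fin.
by rewrite -[leRHS]sup0; apply: ereal_sup_ubound; exists mu.
Qed.

End CompactFamilies.

Section Ultrafilters.
Variable T : Type.
Implicit Types (G : set (set T)) (A B : set T).

Lemma ultra_setC G A : UltraFilter G -> G A -> ~ G (~` A).
Proof. by move=> UG GA GnA; apply: (filter_not_empty G); rewrite -(setICr A); exact: filterI. Qed.

Lemma ultra_setU G A B : UltraFilter G -> G (A `|` B) -> G A \/ G B.
Proof.
move=> UG GAB; have [GA|GnA] := in_ultra_setVsetC A UG; first by left.
have [GB|GnB] := in_ultra_setVsetC B UG; first by right.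
by exfalso; apply: ultra_setC GAB _; rewrite setCU; exact: filterI.
Qed.

Lemma ultra_extension (N P : set (set T)) : N set0 ->
    (forall A B, N A -> N B -> N (A `|` B)) ->
    (forall l Z, all (fun B => `[< P B >]) l -> N Z ->
       ~ \big[setI/setT]_(B <- l) B `<=` Z) ->
  exists G, [/\ UltraFilter G, P `<=` G & forall Z, N Z -> ~ G Z].
Proof.
move=> N0 NU finP.
pose F := [set X | exists l Z, [/\ all (fun B => `[< P B >]) l, N Z &
                                   \big[setI/setT]_(B <- l) B `\` Z `<=` X]].
have F_proper : ProperFilter F.
  split=> [[l [Z [Pl NZ lZ0]]]|].
    by apply: (finP _ _ Pl NZ) => x lx; apply: contrapT => /(conj lx)/lZ0.
  split=> [|X Y [l1 [Z1 [P1 N1 lZ1]]] [l2 [Z2 [P2 N2 lZ2]]]|X Y XY [l [Z [Pl NZ lZ]]]].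
  - by exists [::], set0; split; rewrite ?big_nil.
  - exists (l1 ++ l2), (Z1 `|` Z2); split; [by rewrite all_cat P1|exact: NU|].
    rewrite big_cat /= => x [[x1 x2] /not_orP[nZ1 nZ2]]; split; [exact: lZ1|exact: lZ2].
  - by exists l, Z; split => //; exact: subset_trans XY.
have [G [UG FG]] := ultraFilterLemma F_proper.
exists G; split => [//|B PB|Z NZ GZ].
  by apply: FG; exists [:: B], set0; split; rewrite ?big_seq1 /= ?andbT //; apply/asboolP.
have : F (~` Z) by exists [::], Z; split; rewrite ?big_nil.
by move=> /FG; exact: ultra_setC GZ.
Qed.

End Ultrafilters.

Section UltraDirac.
Variables (T : Type) (R : realType).
Implicit Types (G H : set (set T)) (A B : set T).

Definition ultra_dirac G : set T -> R := fun A => if `[< G A >] then 1 else 0.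

Lemma ultra_dirac_in G A : G A -> ultra_dirac G A = 1.
Proof. by move=> GA; rewrite /ultra_dirac asboolT. Qed.

Lemma ultra_dirac_notin G A : ~ G A -> ultra_dirac G A = 0.
Proof. by move=> nGA; rewrite /ultra_dirac asboolF. Qed.

Lemma ultra_dirac_fprob G : UltraFilter G -> is_fprob (ultra_dirac G).
Proof.
move=> UG; split=> [|A|A B AB0]; first by rewrite ultra_dirac_in //; exact: filterT.
  by rewrite /ultra_dirac; case: asboolP.
have [GA|nGA] := pselect (G A).
  have nGB : ~ G B.
    move=> GB; apply: (ultra_setC UG GA); apply: filterS GB => x Bx Ax.
    by have : (A `&` B) x by []; rewrite AB0.
  rewrite (ultra_dirac_in GA) (ultra_dirac_notin nGB) addr0 ultra_dirac_in //.
  exact: (filterS (@subsetUl _ A B) GA).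
rewrite (ultra_dirac_notin nGA) add0r /ultra_dirac (_ : G (A `|` B) = G B) //.
rewrite propeqE; split=> [/(ultra_setU UG)[/nGA|]|] //.
exact: (filterS (@subsetUr _ A B)).
Qed.

Lemma ultra_near_int_bdd G (f : T -> R) e : UltraFilter G -> bounded_fun f -> 0 < e ->
  G [set x | `|f x - int_bdd (ultra_dirac G) f| < e].
Proof.
move=> UG fb e0; set L := int_bdd _ f.
have [//|GnP] := in_ultra_setVsetC [set x | `|f x - L| < e] UG.
have : G ([set x | L + e <= f x] `|` [set x | f x <= L - e]).
  apply: (filterS _ GnP) => x /negP; rewrite ltr_norml negb_and -!leNgt.
  by case/orP => ? /=; [right|left]; lra.
have G_fprob := ultra_dirac_fprob UG.
case/(ultra_setU UG) => /ultra_dirac_in GA.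
  by have := int_bdd_ge G_fprob fb GA (fun x (h : L + e <= f x) => h); rewrite -/L; lra.
by have := int_bdd_le G_fprob fb GA (fun x (h : f x <= L - e) => h); rewrite -/L; lra.
Qed.

Lemma ultra_dirac_nbhd G (fs : seq (T -> R)) eps : UltraFilter G -> 0 < eps ->
    all (fun f => `[< bounded_fun f >]) fs ->
  exists2 B, G B & forall H, UltraFilter H -> H B ->
    all (fun f => `|int_bdd (ultra_dirac H) f - int_bdd (ultra_dirac G) f| < eps) fs.
Proof.
move=> UG eps0; elim: fs => [|f fs IH] /=; first by exists setT => //; exact: filterT.
move=> /andP[/asboolP fb /IH[B GB near_fs]].
set L := int_bdd _ f; set P := [set x | `|f x - L| < eps / 2].
have GP : G P by apply: ultra_near_int_bdd; rewrite ?divr_gt0.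
exists (P `&` B) => [|H UH HPB]; first exact: filterI.
have HB : H B by apply: (filterS _ HPB) => x [].
have HP : ultra_dirac H P = 1 by apply/ultra_dirac_in; apply: (filterS _ HPB) => x [].
rewrite (near_fs H UH HB) andbT.
have H_fprob := ultra_dirac_fprob UH.
have lb : L - eps / 2 <= int_bdd (ultra_dirac H) f.
  by apply: (int_bdd_ge H_fprob fb HP) => x; rewrite /P /= ltr_norml => /andP[]; lra.
have ub : int_bdd (ultra_dirac H) f <= L + eps / 2.
  by apply: (int_bdd_le H_fprob fb HP) => x; rewrite /P /= ltr_norml => /andP[]; lra.
by rewrite ltr_norml; apply/andP; split; lra.
Qed.

End UltraDirac.
Arguments ultra_dirac {T R} G.

Section UltraFamily.
Variables (T : Type) (R : realType) (N : set (set T)).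
Hypotheses (N0 : N set0) (NU : forall A B, N A -> N B -> N (A `|` B))
  (NS : forall A B, N A -> B `<=` A -> N B).

Definition avoiding_ultra : set (set (set T)) :=
  [set G | UltraFilter G /\ forall Z, N Z -> ~ G Z].

Local Notation K := [set @ultra_dirac T R G | G in avoiding_ultra].

Lemma avoiding_ultra_exists A : ~ N A -> exists2 G, avoiding_ultra G & G A.
Proof.
move=> nNA; have [l Z lA NZ lZ|G [UG AG NG]] := @ultra_extension _ N [set A] N0 NU.
  apply/nNA/(NS NZ) => x Ax; apply: lZ; elim: l lA => [|B l IH] /=.
    by rewrite big_nil.
  by move=> /andP[/asboolP -> /IH Al]; rewrite big_cons.
by exists G => //; exact: AG.
Qed.

Lemma ultra_family_fprob : K `<=` @is_fprob T R.
Proof. by move=> _ [G [UG _] <-]; exact: ultra_dirac_fprob. Qed.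

Lemma ultra_family_null A : null_for K A <-> N A.
Proof.
split=> [A0|NA _ [G [_ NG] <-]]; last exact/ultra_dirac_notin/NG.
apply: contrapT => /avoiding_ultra_exists[G AG GA].
have /A0 : K (ultra_dirac G) by exists G.
by rewrite ultra_dirac_in // => /eqP; rewrite oner_eq0.
Qed.

Lemma ultra_family_zero_one : zero_one_family K.
Proof.
move=> A; have [NA|/avoiding_ultra_exists[G AG GA]] := pselect (N A).
  by left; apply/ultra_family_null.
by right; exists (ultra_dirac G); [exists G | exact: ultra_dirac_in].
Qed.

Section Compactness.
Variable Us : set (set (set T -> R)).
Hypotheses (Us_open : forall U, Us U -> wstar_open U)
  (Us_cover : K `<=` \bigcup_(U in Us) U).

Let small (B : set T) :=
  exists2 U, Us U & forall H, avoiding_ultra H -> H B -> U (ultra_dirac H).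

Let small_in_avoiding_ultra G : avoiding_ultra G -> exists2 B, small B & G B.
Proof.
move=> AG; have /Us_cover[U UsU UG'] : K (ultra_dirac G) by exists G.
have [fs [eps [fsb eps0 near_U]]] := Us_open UsU UG'.
have [B GB near_fs] := ultra_dirac_nbhd AG.1 eps0 fsb.
exists B => //; exists U => // H [UH _] HB.
by apply: near_U; [exact: ultra_dirac_fprob | exact: near_fs].
Qed.

Let compl_small_cover l :
    all (fun X => `[< exists2 B, small B & X = ~` B >]) l ->
  exists2 lu, all (fun U => `[< Us U >]) lu &
    forall H, avoiding_ultra H -> H (~` \big[setI/setT]_(X <- l) X) ->
      has (fun U => `[< U (ultra_dirac H) >]) lu.
Proof.
elim: l => [|X l IH] /=.
  by move=> _; exists [::] => // H [UH _]; rewrite big_nil setCT => /(filter_not_empty H).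
move=> /andP[/asboolP[B [U UsU BU] ->] /IH[lu Uslu lu_cover]].
exists (U :: lu); first by rewrite /= Uslu andbT; apply/asboolP.
move=> H [UH NH]; rewrite big_cons setCI setCK => /(ultra_setU UH)[HB|Hl].
  by apply/orP; left; apply/asboolP; exact: BU.
by apply/orP; right; exact: lu_cover.
Qed.

Lemma ultra_family_finite_subcover : exists l, all (fun U => `[< Us U >]) l /\
  K `<=` (fun mu => has (fun U => `[< U mu >]) l).
Proof.
apply: contrapT => no_subcover.
(* Otherwise the complements of small sets can be added to any avoiding
   ultrafilter, and such an ultrafilter contains no small set. *)
have [l Z Pl NZ lZ|W [UW smallW NW]] :=
    @ultra_extension _ N [set X | exists2 B, small B & X = ~` B] N0 NU.
  have [lu Uslu lu_cover] := compl_small_cover Pl.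
  apply: no_subcover; exists lu; split => // _ [G [UG NG] <-]; apply: lu_cover => //.
  have [GZ|GnZ] := in_ultra_setVsetC Z UG; first by have := NG _ NZ GZ.
  by apply: (filterS _ GnZ) => x nZx lx; apply: nZx; exact: lZ.
have [B smallB WB] := small_in_avoiding_ultra (conj UW NW).
by apply: (ultra_setC UW WB); apply: smallW; exists B.
Qed.

End Compactness.

Lemma ultra_family_compact : wstar_compact K.
Proof. by move=> Us Us_open Us_cover; exact: ultra_family_finite_subcover. Qed.

End UltraFamily.

Section Characterization.
Variables (T : Type) (R : realType) (ge : (T -> R) -> (T -> R) -> Prop).

Definition represented_by (K : set (set T -> R)) : Prop :=
  forall f g, ge f g <->
    (0 <= ereal_inf [set int_ext mu (fun x => (f x - g x)%R) | mu in K])%E.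

Lemma induced_by_ideal_represented : (forall f, ge f f) -> induced_by_ideal ge ->
  exists K, [/\ K `<=` @is_fprob T R, wstar_compact K, sup_zero_one K & represented_by K].
Proof.
move=> ge_refl [N [NU NS NT geN]].
have N0 : N set0 by apply: NS ((geN _ _).1 (ge_refl (fun=> 0)) 1 ltr01) _.
pose K := [set @ultra_dirac T R G | G in avoiding_ultra N].
have K_fprob : K `<=` @is_fprob T R by exact: ultra_family_fprob.
have K01 : zero_one_family K by exact: ultra_family_zero_one.
have [G AG _] := avoiding_ultra_exists N0 NU NS NT.
exists K; split=> //; first exact: ultra_family_compact.
  by apply: zero_one_family_sup => //; exists (ultra_dirac G); exists G.
move=> f g; rewrite geN zero_one_family_inf_ge0 //.
by split=> null e /null /ultra_family_null; apply.
Qed.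

Lemma represented_induced_by_ideal K : K `<=` @is_fprob T R -> wstar_compact K ->
  sup_zero_one K -> represented_by K -> induced_by_ideal ge.
Proof.
move=> K_fprob K_compact sup01 geK.
have K01 := wstar_compact_zero_one_family K_fprob K_compact sup01.
have K_neq0 : exists mu, K mu.
  apply: contrapT => K0; have := sup01 setT.
  rewrite (_ : K = set0) ?image_set0 ?ereal_sup0 ?predeqE => [[]//|x].
  by split=> // Kx; apply: K0; exists x.
exists (null_for K); split.
- exact: null_forU.
- exact: null_for_subset.
- exact: null_forT.
- by move=> f g; rewrite geK zero_one_family_inf_ge0.
Qed.

End Characterization.

Unset Implicit Arguments. Set Strict Implicit.

Theorem lemma2 (T : Type) (R : realType) (w : T)
    (ge : (T -> R) -> (T -> R) -> Prop) :
  regular_stochastic_order ge ->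
  (induced_by_ideal ge <->
   exists K : set (set T -> R),
     [/\ K `<=` @is_fprob T R,
         wstar_compact K,
         (forall A : set T,
            ereal_sup [set (mu A)%:E | mu in K] = 0%E \/
            ereal_sup [set (mu A)%:E | mu in K] = 1%E) &
         (forall f g : T -> R,
            ge f g <->
            (0 <= ereal_inf [set int_ext mu (fun x => (f x - g x)%R) | mu in K])%E)]).
Proof.
move=> [ge_refl _]; split; first exact: induced_by_ideal_represented.
by case=> K [K_fprob K_compact sup01 geK]; exact: represented_induced_by_ideal geK.
Qed.
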